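(* Let $Q$ be an inverse semigroup and let $b,c,u,v\in Q$ with $u\,\mathcal{R}\,v$. Then $bc^{-1}=u^{-1}v$ if and only if \[ub=vc,\qquad v\,\mathcal{R}\,vc,\qquad L_b\wedge L_c=L_{ub},\] where $\wedge$ is the meet in the semilattice $Q/\mathcal{L}$.
   Context: $a^{-1}$ denotes the unique inverse of $a$ in $Q$; $\mathcal{R},\mathcal{L}$ are Green's relations of $Q$ and $L_a$ the $\mathcal{L}$-class of $a$. The set $Q/\mathcal{L}$ is partially ordered by $L_a\leq L_b$ iff $Q^1a\subseteq Q^1b$; it is a meet semilattice, with $L_a\wedge L_b=L_c$ iff $c^{-1}c=a^{-1}ab^{-1}b$. *)

Record InverseSemigroup := {
  carrier :> Type;
  mul : carrier -> carrier -> carrier;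
  inv : carrier -> carrier;
  mulA : forall a b c, mul a (mul b c) = mul (mul a b) c;
  inv_regular : forall a, mul (mul a (inv a)) a = a;
  inv_inv_regular : forall a, mul (mul (inv a) a) (inv a) = inv a;
  inv_unique : forall a b, mul (mul a b) a = a -> mul (mul b a) b = b -> b = inv a
}.

Arguments mul {_} _ _.
Arguments inv {_} _.

Section Green.
Variable Q : InverseSemigroup.

(* y ∈ a Q^1 *)
Definition in_rideal1 (a y : Q) : Prop := y = a \/ exists x : Q, y = mul a x.
(* y ∈ Q^1 a *)
Definition in_lideal1 (a y : Q) : Prop := y = a \/ exists x : Q, y = mul x a.

Definition greenR (a b : Q) : Prop := forall y, in_rideal1 a y <-> in_rideal1 b y.
Definition greenL (a b : Q) : Prop := forall y, in_lideal1 a y <-> in_lideal1 b y.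

Definition leL (a b : Q) : Prop := forall y, in_lideal1 a y -> in_lideal1 b y.

Definition is_meetL (a b d : Q) : Prop :=
  leL d a /\ leL d b /\ (forall e, leL e a -> leL e b -> leL e d).
End Green.

Arguments greenR {_} _ _.
Arguments greenL {_} _ _.
Arguments leL {_} _ _.
Arguments is_meetL {_} _ _ _.

(* In an inverse semigroup idempotents commute and (ab)^-1 = b^-1 a^-1.
   Consequently a R b iff aa^-1 = bb^-1, L_a <= L_b iff a = a b^-1 b, and
   L_b /\ L_c = L_d iff d^-1 d = b^-1 b c^-1 c.  In these terms v R vc becomes
   vcc^-1 = v and L_b /\ L_c = L_ub becomes u^-1 u b = b c^-1 c, and both
   directions of the equivalence are short equational computations; only the
   forward one uses u R v, through uu^-1 v = v and u^-1 v v^-1 u = u^-1 u. *)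

From Stdlib Require Import Setoid.

Local Infix "**" := mul (at level 40, left associativity).
Local Notation i := inv.

Ltac reassoc t := transitivity t; [repeat rewrite mulA; reflexivity |].

Section InverseSemigroupTheory.
Context {Q : InverseSemigroup}.

Definition idempotent (e : Q) : Prop := e ** e = e.

Lemma invK (a : Q) : i (i a) = a.
Proof. symmetry; apply inv_unique; [apply inv_inv_regular | apply inv_regular]. Qed.

Lemma idempotent_inv (e : Q) : idempotent e -> i e = e.
Proof. intro he; symmetry; apply inv_unique; rewrite he; exact he. Qed.

Lemma idempotent_mulV (a : Q) : idempotent (a ** i a).
Proof. unfold idempotent; reassoc ((a ** i a ** a) ** i a); now rewrite inv_regular. Qed.

Lemma idempotent_Vmul (a : Q) : idempotent (i a ** a).
Proof. unfold idempotent; reassoc ((i a ** a ** i a) ** a); now rewrite inv_inv_regular. Qed.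

Lemma mul_Vmul (a : Q) : a ** (i a ** a) = a.
Proof. rewrite mulA; apply inv_regular. Qed.

Lemma idempotent_mul (e f : Q) :
  idempotent e -> idempotent f -> idempotent (e ** f).
Proof.
  unfold idempotent; intros he hf.
  set (x := i (e ** f)).
  (* f x e is also an inverse of ef, hence equal to x by uniqueness *)
  assert (hfxe : f ** x ** e = x).
  { apply inv_unique.
    - reassoc (e ** (f ** f) ** x ** (e ** e) ** f); rewrite he, hf.
      reassoc ((e ** f) ** x ** (e ** f)); apply inv_regular.
    - reassoc (f ** (x ** (e ** e) ** (f ** f) ** x) ** e); rewrite he, hf.
      reassoc (f ** (x ** (e ** f) ** x) ** e); unfold x; now rewrite inv_inv_regular. }
  assert (hxe : x ** e = x).
  { rewrite <- hfxe at 1; reassoc (f ** x ** (e ** e)); now rewrite he. }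
  assert (hfx : f ** x = x).
  { rewrite <- hfxe at 1; reassoc ((f ** f) ** x ** e); now rewrite hf. }
  assert (hxx : x ** x = x).
  { transitivity (x ** (e ** f) ** x); [| apply inv_inv_regular].
    symmetry; reassoc ((x ** e) ** (f ** x)); now rewrite hxe, hfx. }
  assert (hef : e ** f = x).
  { rewrite <- (invK (e ** f)); exact (idempotent_inv x hxx). }
  now rewrite hef.
Qed.

Lemma idempotent_comm (e f : Q) : idempotent e -> idempotent f -> e ** f = f ** e.
Proof.
  intros he hf.
  rewrite <- (idempotent_inv (e ** f) (idempotent_mul e f he hf)).
  symmetry; apply inv_unique.
  - reassoc (e ** (f ** f) ** (e ** e) ** f); rewrite he, hf.
    reassoc ((e ** f) ** (e ** f)); exact (idempotent_mul e f he hf).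
  - reassoc (f ** (e ** e) ** (f ** f) ** e); rewrite he, hf.
    reassoc ((f ** e) ** (f ** e)); exact (idempotent_mul f e hf he).
Qed.

Lemma invM (a b : Q) : i (a ** b) = i b ** i a.
Proof.
  symmetry; apply inv_unique.
  - reassoc (a ** ((b ** i b) ** (i a ** a)) ** b).
    rewrite (idempotent_comm _ _ (idempotent_mulV b) (idempotent_Vmul a)).
    reassoc ((a ** i a ** a) ** (b ** i b ** b)); now rewrite !inv_regular.
  - reassoc (i b ** ((i a ** a) ** (b ** i b)) ** i a).
    rewrite (idempotent_comm _ _ (idempotent_Vmul a) (idempotent_mulV b)).
    reassoc ((i b ** b ** i b) ** (i a ** a ** i a)); now rewrite !inv_inv_regular.
Qed.

Lemma mulV_mul_of_in_rideal1 (a y : Q) : in_rideal1 Q a y -> a ** i a ** y = y.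
Proof.
  intros [-> | [x ->]]; [apply inv_regular |].
  reassoc ((a ** i a ** a) ** x); now rewrite inv_regular.
Qed.

Lemma greenR_mulV (a b : Q) : greenR a b <-> a ** i a = b ** i b.
Proof.
  split.
  - intro hab.
    assert (ha : b ** i b ** a = a).
    { apply mulV_mul_of_in_rideal1, hab; now left. }
    assert (hb : a ** i a ** b = b).
    { apply mulV_mul_of_in_rideal1, hab; now left. }
    transitivity ((b ** i b) ** (a ** i a)).
    + symmetry; reassoc ((b ** i b ** a) ** i a); now rewrite ha.
    + rewrite (idempotent_comm _ _ (idempotent_mulV b) (idempotent_mulV a)).
      reassoc ((a ** i a ** b) ** i b); now rewrite hb.
  - intro E.
    assert (ga : a = b ** (i b ** a)).
    { rewrite mulA, <- E; symmetry; apply inv_regular. }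
    assert (gb : b = a ** (i a ** b)).
    { rewrite mulA, E; symmetry; apply inv_regular. }
    intro y; split; intros [-> | [x ->]]; right.
    + now exists (i b ** a).
    + exists (i b ** a ** x); rewrite ga at 1; now repeat rewrite mulA.
    + now exists (i a ** b).
    + exists (i a ** b ** x); rewrite gb at 1; now repeat rewrite mulA.
Qed.

Lemma leL_Vmul (a b : Q) : leL a b <-> a ** (i b ** b) = a.
Proof.
  split.
  - intro hab; destruct (hab a (or_introl eq_refl)) as [E | [x E]]; rewrite E.
    + apply mul_Vmul.
    + reassoc (x ** (b ** i b ** b)); now rewrite inv_regular.
  - intros E y [-> | [x ->]]; right.
    + exists (a ** i b); rewrite <- E at 1; now repeat rewrite mulA.
    + exists (x ** a ** i b); rewrite <- E at 1; now repeat rewrite mulA.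
Qed.

Lemma is_meetL_Vmul (b c d : Q) :
  is_meetL b c d <-> i d ** d = i b ** b ** (i c ** c).
Proof.
  unfold is_meetL; rewrite !leL_Vmul.
  set (e := i b ** b); set (f := i c ** c).
  assert (he : idempotent e) by apply idempotent_Vmul.
  assert (hf : idempotent f) by apply idempotent_Vmul.
  assert (hefe : e ** f ** e = e ** f).
  { rewrite <- mulA, (idempotent_comm f e hf he), mulA; now rewrite he. }
  assert (heff : e ** f ** f = e ** f) by now rewrite <- mulA, hf.
  split.
  - intros [hdb [hdc hglb]].
    assert (hd : i d ** d ** (e ** f) = i d ** d).
    { reassoc (i d ** (d ** e) ** f); rewrite hdb; now rewrite <- mulA, hdc. }
    assert (hefd : e ** f ** (i d ** d) = e ** f).
    { apply leL_Vmul, hglb; apply leL_Vmul; assumption. }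
    rewrite <- hd at 1; rewrite <- hefd at 2.
    apply idempotent_comm; [apply idempotent_Vmul | now apply idempotent_mul].
  - intro E.
    assert (hglb : forall x, x ** e = x -> x ** f = x -> x ** (i d ** d) = x).
    { intros x hxe hxf; rewrite E; fold e f; now rewrite mulA, hxe, hxf. }
    assert (hdg : forall g, e ** f ** g = e ** f -> d ** g = d).
    { intros g hg; rewrite <- (mul_Vmul d) at 1 2; rewrite E; fold e f.
      now rewrite <- mulA, hg. }
    split; [| split].
    + now apply hdg.
    + now apply hdg.
    + intros x hxb hxc; apply leL_Vmul, hglb; apply leL_Vmul; assumption.
Qed.

Lemma greenR_mulr (a x : Q) : greenR a (a ** x) <-> a ** x ** i x = a.
Proof.
  rewrite greenR_mulV, invM; split.
  - intro E; symmetry.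
    rewrite <- (inv_regular Q a) at 1; rewrite E.
    reassoc (a ** ((x ** i x) ** (i a ** a))).
    rewrite (idempotent_comm _ _ (idempotent_mulV x) (idempotent_Vmul a)).
    reassoc ((a ** i a ** a) ** x ** i x); now rewrite inv_regular.
  - intro E; rewrite <- E at 1; now repeat rewrite mulA.
Qed.

Lemma is_meetL_mull (a b c : Q) :
  is_meetL b c (a ** b) <-> i a ** a ** b = b ** (i c ** c).
Proof.
  rewrite is_meetL_Vmul, invM; split.
  - intro E.
    rewrite <- (inv_regular Q b) at 1.
    reassoc ((i a ** a) ** (b ** i b) ** b).
    rewrite (idempotent_comm _ _ (idempotent_Vmul a) (idempotent_mulV b)).
    reassoc (b ** (i b ** i a ** (a ** b))); rewrite E.
    reassoc ((b ** i b ** b) ** (i c ** c)); now rewrite inv_regular.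
  - intro E; reassoc (i b ** (i a ** a ** b)); rewrite E.
    now repeat rewrite mulA.
Qed.

Lemma mulV_Vmul_of_mulV_eq (u v : Q) :
  u ** i u = v ** i v -> i u ** v ** i (i u ** v) = i u ** u.
Proof.
  intro huv; rewrite invM, invK.
  reassoc (i u ** (v ** i v) ** u); rewrite <- huv.
  reassoc ((i u ** u ** i u) ** u); now rewrite inv_inv_regular.
Qed.

End InverseSemigroupTheory.

Theorem lemma3p6 (Q : InverseSemigroup) (b c u v : Q) (huv : greenR u v) :
  mul b (inv c) = mul (inv u) v <->
  (mul u b = mul v c /\ greenR v (mul v c) /\ is_meetL b c (mul u b)).
Proof.
  apply greenR_mulV in huv.
  rewrite greenR_mulr, is_meetL_mull; split.
  - intro H.
    assert (hv : u ** b ** i c = v).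
    { reassoc (u ** (b ** i c)); rewrite H.
      reassoc (u ** i u ** v); rewrite huv; apply inv_regular. }
    assert (hVu : b ** i c ** i (b ** i c) = i u ** u).
    { rewrite H; exact (mulV_Vmul_of_mulV_eq u v huv). }
    assert (hu : i u ** u ** b = b ** (i c ** c)).
    { rewrite <- hVu, invM, invK.
      reassoc (b ** ((i c ** c) ** (i b ** b))).
      rewrite (idempotent_comm _ _ (idempotent_Vmul c) (idempotent_Vmul b)).
      reassoc ((b ** i b ** b) ** (i c ** c)); now rewrite inv_regular. }
    assert (hub : u ** b = v ** c).
    { rewrite <- hv, <- (inv_regular Q u) at 1.
      reassoc (u ** (i u ** u ** b)); rewrite hu; now repeat rewrite mulA. }
    split; [exact hub | split; [| exact hu]].
    now rewrite <- hub.
  - intros [hub [hv hu]]; symmetry.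
    rewrite <- hv, <- hub.
    reassoc (i u ** u ** b ** i c); rewrite hu.
    reassoc (b ** (i c ** c ** i c)); now rewrite inv_inv_regular.
Qed.
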